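(* With $G$, $d$, $G_0$, $X$ and the topology $\tau$ as in the context, the space $(X,\tau)$ is Hausdorff.
   Context: Let $G$ be a Polish group, $d$ a compatible right-invariant metric on $G$ (i.e. $d(g_0h,g_1h)=d(g_0,g_1)$) bounded by $1$, and $G_0$ a countable dense subgroup of $G$. Let $\mathcal L(G,d)$ be the set of functions $f:G\to[0,1]$ with $|f(g_1)-f(g_2)|\le d(g_1,g_2)$ for all $g_1,g_2$. Let $\mathbb Q^{<\mathbb N}$ be the set of finite sequences of rationals; for $s\in\mathbb Q^{<\mathbb N}$ and rationals $a_1,\dots,a_k$, $sa_1\dots a_k$ denotes the sequence $s$ followed by $a_1,\dots,a_k$ (natural numbers are regarded as rationals). Elements of $\mathcal L(G,d)^{\mathbb Q^{<\mathbb N}}$ are families $\vec f=(f_s)_{s\in\mathbb Q^{<\mathbb N}}$, and $G$ acts by $(g\cdot\vec f)_s(g_0)=f_s(g_0g)$. Let $X$ be the set of $\vec f\in\mathcal L(G,d)^{\mathbb Q^{<\mathbb N}}$ such that, writing $t=sq_0q_1q_2\,0\,m\,n$ and $u=sq_0q_1q_2\,1\,m\,n$: (1) for all $s\in\mathbb Q^{<\mathbb N}$, $g_0\in G_0$, $m,n\in\mathbb N$, $q_0,q_1,q_2,\epsilon\in\mathbb Q\cap(0,1)$ with $0<q_i\pm\epsilon<1$ ($i=0,1,2$): $f_t(g_0)<q_1-\epsilon$ or $f_s(g_0)\le q_0+\epsilon$; (2) for the same range of parameters: $f_u(g_0)\ge q_2+\epsilon$ or $f_t(g_0)\ge q_1-\epsilon$;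 (3) for all $s\in\mathbb Q^{<\mathbb N}$, $g_0\in G_0$, $q_0,\epsilon\in\mathbb Q\cap(0,1)$: if $f_s(g_0)<q_0$ then there are $q_1,q_2\in\mathbb Q$, $g_1\in G_0$, $m,n\in\mathbb N$ with $0<q_2<q_1<q_0<1$, $d(g_0,g_1)<\epsilon$, and $f_u(g_1)<q_2$ where $u=sq_0q_1q_2\,1\,m\,n$. The topology $\tau$ on $X$ is the one generated by the subbasis of all sets $\{\vec f\in X: f_s(g_0)<q_0\}$ for $s\in\mathbb Q^{<\mathbb N}$, $g_0\in G_0$, $q_0\in\mathbb Q$. *)

From Stdlib Require Export Reals QArith Qcanon Qreals List.
Open Scope R_scope.

(** Rationals are the canonical rationals [Qc] (so that Q^{<N} has no
    duplicate indices); they are viewed as reals through [Q2R]. *)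
Definition QR (q : Qc) : R := Q2R (this q).
Definition nat2Qc (n : nat) : Qc := Q2Qc (inject_Z (Z.of_nat n)).

Definition is_metric {G : Type} (d : G -> G -> R) : Prop :=
  (forall x y, 0 <= d x y) /\
  (forall x y, d x y = 0 <-> x = y) /\
  (forall x y, d x y = d y x) /\
  (forall x y z, d x z <= d x y + d y z).

Definition metric_open {G : Type} (d : G -> G -> R) (U : G -> Prop) : Prop :=
  forall x, U x -> exists r, 0 < r /\ forall y, d x y < r -> U y.

Definition metric_complete {G : Type} (d : G -> G -> R) : Prop :=
  forall u : nat -> G,
    (forall eps, 0 < eps -> exists N, forall m n, (N <= m)%nat -> (N <= n)%nat ->
        d (u m) (u n) < eps) ->
    exists l, forall eps, 0 < eps -> exists N, forall n, (N <= n)%nat -> d (u n) l < eps.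

Definition is_group {G : Type} (mul : G -> G -> G) (inv : G -> G) (e : G) : Prop :=
  (forall x y z, mul x (mul y z) = mul (mul x y) z) /\
  (forall x, mul e x = x) /\ (forall x, mul x e = x) /\
  (forall x, mul (inv x) x = e) /\ (forall x, mul x (inv x) = e).

Definition polish_group_with_compatible_metric {G : Type}
    (mul : G -> G -> G) (inv : G -> G) (e : G) (d : G -> G -> R) : Prop :=
  is_group mul inv e /\ is_metric d /\
  (forall x y eps, 0 < eps -> exists delta, 0 < delta /\
     forall x' y', d x x' < delta -> d y y' < delta -> d (mul x y) (mul x' y') < eps) /\
  (forall x eps, 0 < eps -> exists delta, 0 < delta /\
     forall x', d x x' < delta -> d (inv x) (inv x') < eps) /\
  (exists c : nat -> G, forall x eps, 0 < eps -> exists n, d x (c n) < eps) /\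
  (exists d' : G -> G -> R, is_metric d' /\ metric_complete d' /\
     forall U : G -> Prop, metric_open d U <-> metric_open d' U).

Definition right_invariant {G : Type} (mul : G -> G -> G) (d : G -> G -> R) : Prop :=
  forall g0 g1 h, d (mul g0 h) (mul g1 h) = d g0 g1.

Definition bounded_by_1 {G : Type} (d : G -> G -> R) : Prop :=
  forall x y, d x y <= 1.

Definition countable_dense_subgroup {G : Type} (mul : G -> G -> G) (inv : G -> G)
    (e : G) (d : G -> G -> R) (G0 : G -> Prop) : Prop :=
  G0 e /\ (forall x y, G0 x -> G0 y -> G0 (mul x y)) /\ (forall x, G0 x -> G0 (inv x)) /\
  (exists enum : nat -> G, forall x, G0 x <-> exists n, enum n = x) /\
  (forall x eps, 0 < eps -> exists g, G0 g /\ d x g < eps).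

Definition in_L {G : Type} (d : G -> G -> R) (f : G -> R) : Prop :=
  (forall g, 0 <= f g <= 1) /\ (forall g1 g2, Rabs (f g1 - f g2) <= d g1 g2).

Definition family (G : Type) := list Qc -> G -> R.

(** the action (g . f)_s (g0) = f_s (g0 g) (not needed for the statement) *)
Definition act {G : Type} (mul : G -> G -> G) (g : G) (F : family G) : family G :=
  fun s g0 => F s (mul g0 g).

Definition in01 (q : Qc) : Prop := 0 < QR q < 1.

Definition idx_t (s : list Qc) (q0 q1 q2 : Qc) (m n : nat) : list Qc :=
  s ++ (q0 :: q1 :: q2 :: nat2Qc 0 :: nat2Qc m :: nat2Qc n :: nil).
Definition idx_u (s : list Qc) (q0 q1 q2 : Qc) (m n : nat) : list Qc :=
  s ++ (q0 :: q1 :: q2 :: nat2Qc 1 :: nat2Qc m :: nat2Qc n :: nil).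

Definition in_X {G : Type} (d : G -> G -> R) (G0 : G -> Prop) (F : family G) : Prop :=
  (forall s, in_L d (F s)) /\
  (* (1) *)
  (forall s g0 m n q0 q1 q2 eps, G0 g0 ->
     in01 q0 -> in01 q1 -> in01 q2 -> in01 eps ->
     0 < QR q0 - QR eps -> QR q0 + QR eps < 1 ->
     0 < QR q1 - QR eps -> QR q1 + QR eps < 1 ->
     0 < QR q2 - QR eps -> QR q2 + QR eps < 1 ->
     F (idx_t s q0 q1 q2 m n) g0 < QR q1 - QR eps \/ F s g0 <= QR q0 + QR eps) /\
  (* (2) *)
  (forall s g0 m n q0 q1 q2 eps, G0 g0 ->
     in01 q0 -> in01 q1 -> in01 q2 -> in01 eps ->
     0 < QR q0 - QR eps -> QR q0 + QR eps < 1 ->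
     0 < QR q1 - QR eps -> QR q1 + QR eps < 1 ->
     0 < QR q2 - QR eps -> QR q2 + QR eps < 1 ->
     F (idx_u s q0 q1 q2 m n) g0 >= QR q2 + QR eps \/
     F (idx_t s q0 q1 q2 m n) g0 >= QR q1 - QR eps) /\
  (* (3) *)
  (forall s g0 q0 eps, G0 g0 -> in01 q0 -> in01 eps ->
     F s g0 < QR q0 ->
     exists (q1 q2 : Qc) (g1 : G) (m n : nat),
       0 < QR q2 /\ QR q2 < QR q1 /\ QR q1 < QR q0 /\ QR q0 < 1 /\
       G0 g1 /\ d g0 g1 < QR eps /\ F (idx_u s q0 q1 q2 m n) g1 < QR q2).

Definition subbasic {G : Type} (d : G -> G -> R) (G0 : G -> Prop)
    (U : family G -> Prop) : Prop :=
  exists s g0 q0, G0 g0 /\ forall F, U F <-> (in_X d G0 F /\ F s g0 < QR q0).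

Inductive gen_open {T : Type} (Xs : T -> Prop) (B : (T -> Prop) -> Prop) :
    (T -> Prop) -> Prop :=
  | go_basic U : B U -> gen_open Xs B U
  | go_whole : gen_open Xs B Xs
  | go_inter U V : gen_open Xs B U -> gen_open Xs B V ->
      gen_open Xs B (fun x => U x /\ V x)
  | go_union (C : (T -> Prop) -> Prop) : (forall U, C U -> gen_open Xs B U) ->
      gen_open Xs B (fun x => exists U, C U /\ U x).

Definition tau_open {G : Type} (d : G -> G -> R) (G0 : G -> Prop) :
    (family G -> Prop) -> Prop :=
  gen_open (in_X d G0) (subbasic d G0).

Definition hausdorff_on {T : Type} (Xs : T -> Prop) (op : (T -> Prop) -> Prop) : Prop :=
  forall x y, Xs x -> Xs y -> x <> y ->
    exists U V, op U /\ op V /\ U x /\ V y /\ (forall z, ~ (U z /\ V z)).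

(** Two distinct points of [X] already differ at some coordinate [(s, g0)]
    with [g0] in [G0] (Lipschitz continuity and density of [G0]); say
    [F s g0 < q0 < F' s g0].  Condition (3) for [F] yields a nearby [g1] and an
    index [u] with [F u g1 < q2], while condition (1) for [F'] (still above [q0]
    near [g1]) forces the sibling index [t] below [q1 - eps].  Condition (2)
    says that no point of [X] can be small at both [u] and [t], so the two
    subbasic sets [{H_u(g1) < q2}] and [{H_t(g1) < q1 - eps}] separate [F] and
    [F']. *)

From Stdlib Require Import Lra Lia Classical FunctionalExtensionality.

Lemma Q2R_dense (a b : R) : a < b -> exists q : Q, a < Q2R q < b.
Proof.
  intros Hab.
  destruct (archimed (/ (b - a))) as [Hn_gt _].
  set (n := up (/ (b - a))) in *.
  assert (Hinv_pos : 0 < / (b - a)) by (apply Rinv_0_lt_compat; lra).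
  assert (Hn : (0 < n)%Z) by (apply lt_IZR; simpl; lra).
  assert (HnR : 0 < IZR n) by (apply IZR_lt; lia).
  destruct (archimed (a * IZR n)) as [Hk_gt Hk_le].
  set (k := up (a * IZR n)) in *.
  exists (Qmake k (Z.to_pos n)).
  unfold Q2R; simpl; rewrite Z2Pos.id by lia.
  assert (Hstep : (b - a) * IZR n > 1).
  { replace 1 with ((b - a) * / (b - a)) by (field; lra).
    apply Rmult_lt_compat_l; lra. }
  split; apply (Rmult_lt_reg_r (IZR n)); auto;
    rewrite Rmult_assoc, Rinv_l by lra; lra.
Qed.

Lemma QR_Q2Qc (q : Q) : QR (Q2Qc q) = Q2R q.
Proof. unfold QR; simpl. apply Qeq_eqR, Qred_correct. Qed.

Lemma QR_dense (a b : R) : a < b -> exists q : Qc, a < QR q < b.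
Proof.
  intros Hab; destruct (Q2R_dense a b Hab) as [q Hq].
  exists (Q2Qc q); now rewrite QR_Q2Qc.
Qed.

Lemma QR_sub (x y : Qc) : QR (Q2Qc (this x - this y)) = QR x - QR y.
Proof. rewrite QR_Q2Qc. apply Q2R_minus. Qed.

Lemma in_L_near {G : Type} (d : G -> G -> R) (f : G -> R) (x y : G) (r : R) :
  in_L d f -> d x y < r -> f x - r < f y < f x + r.
Proof.
  intros [_ Hlip] Hxy; specialize (Hlip x y).
  unfold Rabs in Hlip; destruct Rcase_abs; lra.
Qed.

Section SpaceX.

Variables (G : Type) (d : G -> G -> R) (G0 : G -> Prop).

Definition separated (op : (family G -> Prop) -> Prop) (F F' : family G) : Prop :=
  exists U V, op U /\ op V /\ U F /\ V F' /\ (forall z, ~ (U z /\ V z)).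

Lemma separated_sym op F F' : separated op F F' -> separated op F' F.
Proof.
  intros (U & V & HU & HV & HUF & HVF' & Hdisj).
  exists V, U; repeat split; auto.
  intros z [HVz HUz]; exact (Hdisj z (conj HUz HVz)).
Qed.

Lemma tau_open_subbasic s g q :
  G0 g -> tau_open d G0 (fun H => in_X d G0 H /\ H s g < QR q).
Proof. intros Hg; apply go_basic; exists s, g, q; split; tauto. Qed.

Lemma in_X_differ_on_G0 (F F' : family G) :
  (forall x eps, 0 < eps -> exists g, G0 g /\ d x g < eps) ->
  in_X d G0 F -> in_X d G0 F' -> F <> F' ->
  exists s g0, G0 g0 /\ F s g0 <> F' s g0.
Proof.
  intros Hdense HF HF' Hne.
  assert (Hdiff : exists s g, F s g <> F' s g).
  { apply NNPP; intros Hall; apply Hne.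
    apply functional_extensionality; intros s.
    apply functional_extensionality; intros g.
    apply NNPP; intros Hsg; apply Hall; eauto. }
  destruct Hdiff as (s & g & Hsg).
  set (delta := Rabs (F s g - F' s g)).
  assert (Hdelta : 0 < delta) by (apply Rabs_pos_lt; lra).
  destruct (Hdense g (delta / 2)) as (g0 & Hg0 & Hd); [lra|].
  exists s, g0; split; [exact Hg0|]; intros Heq.
  pose proof (in_L_near d (F s) g g0 _ (proj1 HF s) Hd).
  pose proof (in_L_near d (F' s) g g0 _ (proj1 HF' s) Hd).
  unfold delta in *; unfold Rabs in *; destruct Rcase_abs; lra.
Qed.

(** The parameter range of conditions (1) and (2). *)
Definition admissible (q0 q1 q2 eps : Qc) : Prop :=
  in01 q0 /\ in01 q1 /\ in01 q2 /\ in01 eps /\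
  0 < QR q0 - QR eps /\ QR q0 + QR eps < 1 /\
  0 < QR q1 - QR eps /\ QR q1 + QR eps < 1 /\
  0 < QR q2 - QR eps /\ QR q2 + QR eps < 1.

Lemma admissible_exists_below (q0 q1 q2 : Qc) (c : R) :
  0 < QR q2 -> QR q2 < QR q1 -> QR q1 < QR q0 -> QR q0 < 1 -> 0 < c ->
  exists eps, admissible q0 q1 q2 eps /\ QR eps < c.
Proof.
  intros H2 H21 H10 H0 Hc.
  destruct (QR_dense 0 (Rmin c (Rmin (QR q2) (1 - QR q0)))) as [eps Heps].
  { repeat apply Rmin_glb_lt; lra. }
  pose proof (Rmin_l c (Rmin (QR q2) (1 - QR q0))).
  pose proof (Rmin_r c (Rmin (QR q2) (1 - QR q0))).
  pose proof (Rmin_l (QR q2) (1 - QR q0)).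
  pose proof (Rmin_r (QR q2) (1 - QR q0)).
  exists eps; unfold admissible, in01; repeat split; lra.
Qed.

Lemma in_X_cond1 F s g m n q0 q1 q2 eps :
  in_X d G0 F -> G0 g -> admissible q0 q1 q2 eps ->
  QR q0 + QR eps < F s g -> F (idx_t s q0 q1 q2 m n) g < QR q1 - QR eps.
Proof.
  intros (_ & H1 & _) Hg Hadm Hs.
  destruct Hadm as (? & ? & ? & ? & ? & ? & ? & ? & ? & ?).
  destruct (H1 s g m n q0 q1 q2 eps); auto; lra.
Qed.

Lemma in_X_cond2 F s g m n q0 q1 q2 eps :
  in_X d G0 F -> G0 g -> admissible q0 q1 q2 eps ->
  F (idx_u s q0 q1 q2 m n) g < QR q2 -> QR q1 - QR eps <= F (idx_t s q0 q1 q2 m n) g.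
Proof.
  intros (_ & _ & H2 & _) Hg Hadm Hu.
  destruct Hadm as (? & ? & ? & Heps & ? & ? & ? & ? & ? & ?).
  pose proof (proj1 Heps).
  destruct (H2 s g m n q0 q1 q2 eps); auto; lra.
Qed.

Lemma in_X_separated_lt F F' s g0 :
  in_X d G0 F -> in_X d G0 F' -> G0 g0 -> F s g0 < F' s g0 ->
  separated (tau_open d G0) F F'.
Proof.
  intros HF HF' Hg0 Hlt.
  pose proof (proj1 (proj1 HF s) g0) as HF_range.
  pose proof (proj1 (proj1 HF' s) g0) as HF'_range.
  destruct (QR_dense _ _ Hlt) as [q0 Hq0].
  set (gap := (F' s g0 - QR q0) / 2).
  destruct (QR_dense 0 (Rmin 1 gap)) as [eps Heps].
  { apply Rmin_glb_lt; unfold gap; lra. }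
  pose proof (Rmin_l 1 gap); pose proof (Rmin_r 1 gap).
  destruct (proj2 (proj2 (proj2 HF)) s g0 q0 eps Hg0)
    as (q1 & q2 & g1 & m & n & Hq2 & Hq21 & Hq10 & Hq0' & Hg1 & Hd & Hu);
    try (unfold in01; lra).
  assert (Hfar : QR q0 + gap < F' s g1).
  { pose proof (in_L_near d (F' s) g0 g1 _ (proj1 HF' s) Hd).
    unfold gap in *; lra. }
  destruct (admissible_exists_below q0 q1 q2 gap) as (e & Hadm & He);
    auto; [unfold gap; lra|].
  set (r := Q2Qc (this q1 - this e)).
  assert (Hr : QR r = QR q1 - QR e) by apply QR_sub.
  exists (fun H => in_X d G0 H /\ H (idx_u s q0 q1 q2 m n) g1 < QR q2),
         (fun H => in_X d G0 H /\ H (idx_t s q0 q1 q2 m n) g1 < QR r).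
  split; [|split; [|split; [|split]]].
  - exact (tau_open_subbasic _ _ _ Hg1).
  - exact (tau_open_subbasic _ _ _ Hg1).
  - split; [exact HF|exact Hu].
  - split; [exact HF'|]. rewrite Hr; apply in_X_cond1; auto; lra.
  - intros z [[Hz Hzu] [_ Hzt]].
    pose proof (in_X_cond2 z s g1 m n q0 q1 q2 e Hz Hg1 Hadm Hzu); lra.
Qed.

End SpaceX.

Theorem lemma2p4 (G : Type) (mul : G -> G -> G) (inv : G -> G) (e : G)
  (d : G -> G -> R) (G0 : G -> Prop) :
  polish_group_with_compatible_metric mul inv e d ->
  right_invariant mul d ->
  bounded_by_1 d ->
  countable_dense_subgroup mul inv e d G0 ->
  hausdorff_on (in_X d G0) (tau_open d G0).
Proof.
  intros _ _ _ (_ & _ & _ & _ & Hdense) F F' HF HF' Hne.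
  destruct (in_X_differ_on_G0 G d G0 F F' Hdense HF HF' Hne) as (s & g0 & Hg0 & Hsg).
  destruct (Rtotal_order (F s g0) (F' s g0)) as [Hlt | [Heq | Hgt]].
  - exact (in_X_separated_lt G d G0 F F' s g0 HF HF' Hg0 Hlt).
  - contradiction.
  - apply separated_sym; exact (in_X_separated_lt G d G0 F' F s g0 HF' HF Hg0 Hgt).
Qed.
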